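(* Let $(X,d,\preceq)$ be an ordered metric space such that $(X,d)$ is complete, and let $f,g:X\to X$. Suppose: (i) $f(X)\subseteq g(X)$; (ii) $f$ is $g$-comparable; (iii) the pair $(f,g)$ is commuting (i.e. $g(f(x))=f(g(x))$ for all $x\in X$), or alternatively weakly commuting (i.e. $d(gfx,fgx)\le d(gx,fx)$ for all $x\in X$); (iv) $g$ is continuous; (v) either $f$ is continuous or $(X,d,\preceq)$ has the $g$-TCC property; (vi) there exists $x_0\in X$ with $g(x_0)\prec\succ f(x_0)$; (vii) there exists $\alpha\in[0,1)$ with $d(fx,fy)\le\alpha\, d(gx,gy)$ for all $x,y\in X$ with $g(x)\prec\succ g(y)$. Then $f$ and $g$ have a coincidence point.
   Context: An ordered metric space $(X,d,\preceq)$ is a nonempty set $X$ with a metric $d$ and a partial order $\preceq$. For $x,y\in X$, write $x\prec\succ y$ if $x\preceq y$ or $y\preceq x$. For self-maps $f,g$ of $X$: $f$ is $g$-comparable if for all $x,y\in X$, $g(x)\prec\succ g(y)$ implies $f(x)\prec\succ f(y)$. A sequence $\{x_n\}$ is termwise monotone if $x_n\prec\succ x_{n+1}$ for all $n\ge0$. $(X,d,\preceq)$ has the $g$-TCC property if for every termwise monotone sequence $\{x_n\}$ in $X$ converging to some $x\in X$ there is a subsequence $\{x_{n_k}\}$ with $g(x_{n_k})\prec\succ g(x)$ for all $k$. A coincidence point of $f,g$ is $x\in X$ with $g(x)=f(x)$. *)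

From Stdlib Require Import Reals.
Open Scope R_scope.

Definition is_metric {X : Type} (d : X -> X -> R) : Prop :=
  (forall x y, 0 <= d x y) /\
  (forall x y, d x y = 0 <-> x = y) /\
  (forall x y, d x y = d y x) /\
  (forall x y z, d x z <= d x y + d y z).

Definition is_partial_order {X : Type} (le : X -> X -> Prop) : Prop :=
  (forall x, le x x) /\
  (forall x y, le x y -> le y x -> x = y) /\
  (forall x y z, le x y -> le y z -> le x z).

Definition comparable {X : Type} (le : X -> X -> Prop) (x y : X) : Prop :=
  le x y \/ le y x.

Definition converges_to {X : Type} (d : X -> X -> R) (u : nat -> X) (x : X) : Prop :=
  forall eps, 0 < eps -> exists N, forall n, (n >= N)%nat -> d (u n) x < eps.

Definition cauchy {X : Type} (d : X -> X -> R) (u : nat -> X) : Prop :=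
  forall eps, 0 < eps -> exists N, forall m n, (m >= N)%nat -> (n >= N)%nat ->
    d (u m) (u n) < eps.

Definition complete {X : Type} (d : X -> X -> R) : Prop :=
  forall u : nat -> X, cauchy d u -> exists x, converges_to d u x.

Definition continuous_map {X : Type} (d : X -> X -> R) (f : X -> X) : Prop :=
  forall x eps, 0 < eps -> exists delta, 0 < delta /\
    forall y, d x y < delta -> d (f x) (f y) < eps.

Definition g_comparable {X : Type} (le : X -> X -> Prop) (f g : X -> X) : Prop :=
  forall x y, comparable le (g x) (g y) -> comparable le (f x) (f y).

Definition termwise_monotone {X : Type} (le : X -> X -> Prop) (u : nat -> X) : Prop :=
  forall n, comparable le (u n) (u (S n)).

Definition g_TCC {X : Type} (d : X -> X -> R) (le : X -> X -> Prop) (g : X -> X) : Prop :=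
  forall (u : nat -> X) (x : X), termwise_monotone le u -> converges_to d u x ->
    exists phi : nat -> nat, (forall k, (phi k < phi (S k))%nat) /\
      forall k, comparable le (g (u (phi k))) (g x).

Definition commuting {X : Type} (f g : X -> X) : Prop :=
  forall x, g (f x) = f (g x).

Definition weakly_commuting {X : Type} (d : X -> X -> R) (f g : X -> X) : Prop :=
  forall x, d (g (f x)) (f (g x)) <= d (g x) (f x).

From Stdlib Require Import Reals Lra Lia ClassicalEpsilon.
Open Scope R_scope.

(* Jungck iteration: choose x_{n+1} with g x_{n+1} = f x_n, which (i) allows.  The
   sequence y_n = g x_n is termwise monotone by (ii) and (vi), hence the contraction
   (vii) applies to consecutive terms and y is geometrically Cauchy, with a limit z.
   Weak commutativity and the continuity of g force f y_n -> g z; either continuity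
   of f or the g-TCC property (with the contraction) forces f y_n -> f z along a
   subsequence, so g z = f z. *)

Section MetricFacts.

Context {X : Type} (d : X -> X -> R).
Hypothesis Hd : is_metric d.

Lemma dist_ge0 x y : 0 <= d x y.
Proof. destruct Hd as (H & _); apply H. Qed.

Lemma dist_refl x : d x x = 0.
Proof. destruct Hd as (_ & H & _); apply H; reflexivity. Qed.

Lemma dist_sym x y : d x y = d y x.
Proof. destruct Hd as (_ & _ & H & _); apply H. Qed.

Lemma dist_triangle x y z : d x z <= d x y + d y z.
Proof. destruct Hd as (_ & _ & _ & H); apply H. Qed.

Lemma converges_to_unique u p q :
  converges_to d u p -> converges_to d u q -> p = q.
Proof.
  intros Hp Hq. destruct Hd as (_ & Hzero & _). apply Hzero.
  destruct (Rle_lt_dec (d p q) 0) as [Hle|Hlt].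
  { pose proof (dist_ge0 p q); lra. }
  destruct (Hp (d p q / 2)) as [N1 H1]; [lra|].
  destruct (Hq (d p q / 2)) as [N2 H2]; [lra|].
  specialize (H1 (N1 + N2)%nat ltac:(lia)). specialize (H2 (N1 + N2)%nat ltac:(lia)).
  pose proof (dist_triangle p (u (N1 + N2)%nat) q) as Htri.
  rewrite (dist_sym p (u _)) in Htri. lra.
Qed.

Lemma converges_to_subseq u p (phi : nat -> nat) :
  (forall k, (phi k < phi (S k))%nat) -> converges_to d u p ->
  converges_to d (fun k => u (phi k)) p.
Proof.
  intros Hphi Hu eps Heps. destruct (Hu eps Heps) as [N HN]. exists N.
  intros k Hk. apply HN.
  assert (Hid : forall j, (j <= phi j)%nat).
  { induction j as [|j IH]; [lia|]. specialize (Hphi j). lia. }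
  specialize (Hid k). lia.
Qed.

Lemma converges_to_shift u p :
  converges_to d u p -> converges_to d (fun n => u (S n)) p.
Proof.
  intros Hu eps Heps. destruct (Hu eps Heps) as [N HN]. exists N.
  intros n Hn. apply HN; lia.
Qed.

Lemma converges_to_continuous h u p :
  continuous_map d h -> converges_to d u p ->
  converges_to d (fun n => h (u n)) (h p).
Proof.
  intros Hh Hu eps Heps. destruct (Hh p eps Heps) as [delta [Hdelta Hcont]].
  destruct (Hu delta Hdelta) as [N HN]. exists N. intros n Hn.
  rewrite dist_sym. apply Hcont. rewrite dist_sym. apply HN, Hn.
Qed.

Lemma converges_to_close u v p :
  converges_to d u p ->
  (forall eps, 0 < eps -> exists N, forall n, (n >= N)%nat -> d (v n) (u n) < eps) ->
  converges_to d v p.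
Proof.
  intros Hu Hvu eps Heps.
  destruct (Hu (eps / 2)) as [N1 H1]; [lra|].
  destruct (Hvu (eps / 2)) as [N2 H2]; [lra|].
  exists (N1 + N2)%nat. intros n Hn.
  specialize (H1 n ltac:(lia)). specialize (H2 n ltac:(lia)).
  pose proof (dist_triangle (v n) (u n) p). lra.
Qed.

Lemma converges_to_dominated u v p q :
  converges_to d u p -> (forall n, d (v n) q <= d (u n) p) -> converges_to d v q.
Proof.
  intros Hu Hle eps Heps. destruct (Hu eps Heps) as [N HN]. exists N.
  intros n Hn. specialize (HN n Hn). specialize (Hle n). lra.
Qed.

Section Geometric.

Variables (u : nat -> X) (a D : R).
Hypothesis Ha : 0 <= a < 1.
Hypothesis Hstep : forall n, d (u n) (u (S n)) <= a ^ n * D.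

(* The factor [1 - a ^ k] makes the induction on [k] go through without division. *)
Lemma dist_geometric_le m k :
  (1 - a) * d (u m) (u (m + k)%nat) <= a ^ m * D * (1 - a ^ k).
Proof.
  induction k as [|k IH].
  - rewrite Nat.add_0_r, dist_refl. simpl. lra.
  - rewrite Nat.add_succ_r.
    pose proof (dist_triangle (u m) (u (m + k)%nat) (u (S (m + k)))) as Htri.
    pose proof (Hstep (m + k)%nat) as Hlast. rewrite pow_add in Hlast.
    apply (Rmult_le_compat_l (1 - a)) in Htri; [|lra].
    apply (Rmult_le_compat_l (1 - a)) in Hlast; [|lra].
    simpl. lra.
Qed.

Lemma cauchy_geometric : cauchy d u.
Proof.
  assert (HD : 0 <= D).
  { pose proof (Hstep 0) as H0. pose proof (dist_ge0 (u 0%nat) (u 1%nat)).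
    simpl in H0. lra. }
  intros eps Heps.
  destruct (pow_lt_1_zero a ltac:(rewrite Rabs_pos_eq; lra) (eps * (1 - a) / (D + 1)))
    as [N HN].
  { apply Rdiv_lt_0_compat; [apply Rmult_lt_0_compat|]; lra. }
  assert (Hmono : forall m n, (m >= N)%nat -> (m <= n)%nat -> d (u m) (u n) < eps).
  { intros m n Hm Hmn. replace n with (m + (n - m))%nat by lia.
    pose proof (dist_geometric_le m (n - m)) as Hgeo.
    specialize (HN m Hm). rewrite Rabs_pos_eq in HN by (apply pow_le; lra).
    assert (Ham : a ^ m * (D + 1) < eps * (1 - a)).
    { apply (Rmult_lt_compat_r (D + 1)) in HN; [|lra].
      unfold Rdiv in HN. rewrite Rmult_assoc, Rinv_l in HN by lra. lra. }
    pose proof (pow_le a m (proj1 Ha)).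
    assert (0 <= a ^ m * D * a ^ (n - m)).
    { apply Rmult_le_pos; [apply Rmult_le_pos|apply pow_le]; lra. }
    destruct (Rlt_le_dec (d (u m) (u (m + (n - m))%nat)) eps) as [Hlt|Hge]; [exact Hlt|].
    apply (Rmult_le_compat_l (1 - a)) in Hge; nra. }
  exists N. intros m n Hm Hn. destruct (Nat.le_gt_cases m n).
  - apply Hmono; assumption.
  - rewrite dist_sym. apply Hmono; lia.
Qed.

End Geometric.

End MetricFacts.

Lemma weakly_commuting_of_commuting {X : Type} (d : X -> X -> R) (f g : X -> X) :
  is_metric d -> commuting f g -> weakly_commuting d f g.
Proof.
  intros Hd Hfg x. rewrite Hfg, (dist_refl d Hd). apply (dist_ge0 d Hd).
Qed.

Lemma jungck_sequence_exists {X : Type} (f g : X -> X) :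
  (forall x, exists y, f x = g y) ->
  forall x0, exists xs : nat -> X, xs 0%nat = x0 /\ forall n, g (xs (S n)) = f (xs n).
Proof.
  intros Hfg x0.
  set (h := fun x => proj1_sig (constructive_indefinite_description _ (Hfg x))).
  assert (Hh : forall x, f x = g (h x)).
  { intro x. unfold h. destruct (constructive_indefinite_description _ (Hfg x)); auto. }
  exists (fun n => Nat.iter n h x0). split; [reflexivity|].
  intro n. simpl. symmetry. apply Hh.
Qed.

Section JungckSequence.

Context {X : Type} (d : X -> X -> R) (le : X -> X -> Prop) (f g : X -> X).
Hypothesis Hd : is_metric d.
Hypothesis Hfg_comparable : g_comparable le f g.
Hypothesis Hweak : weakly_commuting d f g.
Hypothesis Hg : continuous_map d g.
Variable a : R.
Hypothesis Ha : 0 <= a < 1.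
Hypothesis Hcontr :
  forall x y, comparable le (g x) (g y) -> d (f x) (f y) <= a * d (g x) (g y).

Variable xs : nat -> X.
Hypothesis Hxs : forall n, g (xs (S n)) = f (xs n).
Hypothesis Hx0 : comparable le (g (xs 0%nat)) (f (xs 0%nat)).

Let y n := g (xs n).

Lemma jungck_termwise_monotone : termwise_monotone le y.
Proof.
  intro n. unfold y. rewrite Hxs. induction n as [|n IH]; [exact Hx0|].
  rewrite Hxs. apply Hfg_comparable. rewrite Hxs. exact IH.
Qed.

Lemma jungck_dist_step n : d (y n) (y (S n)) <= a ^ n * d (y 0%nat) (y 1%nat).
Proof.
  induction n as [|n IH]; [simpl; lra|].
  unfold y in *. rewrite !Hxs.
  eapply Rle_trans; [apply Hcontr, jungck_termwise_monotone|].
  rewrite <- !Hxs. simpl. rewrite Rmult_assoc.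
  apply Rmult_le_compat_l; [lra | exact IH].
Qed.

Lemma jungck_cauchy : cauchy d y.
Proof. exact (cauchy_geometric d Hd y a _ Ha jungck_dist_step). Qed.

Variable z : X.
Hypothesis Hz : converges_to d y z.

(* [d (f (g x_n)) (g (f x_n)) <= d (g x_n) (f x_n) = d (y_n) (y_(n+1))] by weak
   commutativity, so [f y_n] shadows [g y_(n+1) -> g z]. *)
Lemma jungck_f_converges : converges_to d (fun n => f (y n)) (g z).
Proof.
  apply (converges_to_close d Hd (fun n => g (y (S n)))).
  - apply (converges_to_shift d (fun n => g (y n))).
    apply (converges_to_continuous d Hd); assumption.
  - intros eps Heps. destruct (jungck_cauchy eps Heps) as [N HN]. exists N.
    intros n Hn. unfold y. rewrite Hxs, dist_sym by exact Hd.
    eapply Rle_lt_trans; [apply Hweak|].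
    rewrite <- Hxs. apply HN; lia.
Qed.

Lemma jungck_coincidence_continuous : continuous_map d f -> g z = f z.
Proof.
  intro Hf. apply (converges_to_unique d Hd (fun n => f (y n))).
  - exact jungck_f_converges.
  - apply (converges_to_continuous d Hd); assumption.
Qed.

Lemma jungck_coincidence_TCC : g_TCC d le g -> g z = f z.
Proof.
  intro Htcc.
  destruct (Htcc y z jungck_termwise_monotone Hz) as [phi [Hphi Hcomp]].
  apply (converges_to_unique d Hd (fun k => f (y (phi k)))).
  - apply (converges_to_subseq d (fun n => f (y n))); [exact Hphi|].
    exact jungck_f_converges.
  - apply (converges_to_dominated d (fun k => g (y (phi k))) _ (g z)).
    + apply (converges_to_subseq d (fun n => g (y n))); [exact Hphi|].
      apply (converges_to_continuous d Hd); assumption.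
    + intro k. eapply Rle_trans; [apply Hcontr, Hcomp|].
      pose proof (dist_ge0 d Hd (g (y (phi k))) (g z)). nra.
Qed.

End JungckSequence.

Theorem corollary3p4 (X : Type) (d : X -> X -> R) (le : X -> X -> Prop)
  (f g : X -> X)
  (Hd : is_metric d) (Hle : is_partial_order le) (Hinh : inhabited X)
  (Hcomplete : complete d)
  (Hi : forall x, exists y, f x = g y)
  (Hii : g_comparable le f g)
  (Hiii : commuting f g \/ weakly_commuting d f g)
  (Hiv : continuous_map d g)
  (Hv : continuous_map d f \/ g_TCC d le g)
  (Hvi : exists x0, comparable le (g x0) (f x0))
  (Hvii : exists alpha, 0 <= alpha < 1 /\
     forall x y, comparable le (g x) (g y) -> d (f x) (f y) <= alpha * d (g x) (g y)) :
  exists x, g x = f x.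
Proof.
  destruct Hvi as [x0 Hx0]. destruct Hvii as [a [Ha Hcontr]].
  assert (Hweak : weakly_commuting d f g).
  { destruct Hiii as [Hcomm|Hweak]; [|exact Hweak].
    exact (weakly_commuting_of_commuting d f g Hd Hcomm). }
  destruct (jungck_sequence_exists f g Hi x0) as [xs [Hstart Hxs]]. subst x0.
  destruct (Hcomplete _ (jungck_cauchy d le f g Hd Hii a Ha Hcontr xs Hxs Hx0))
    as [z Hz].
  exists z. destruct Hv as [Hf | Htcc].
  - exact (jungck_coincidence_continuous d le f g Hd Hii Hweak Hiv a Ha Hcontr
             xs Hxs Hx0 z Hz Hf).
  - exact (jungck_coincidence_TCC d le f g Hd Hii Hweak Hiv a Ha Hcontr
             xs Hxs Hx0 z Hz Htcc).
Qed.
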